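(* Let $r\ge 2$ and $k\ge 3$ be integers. There is a constant $C=C(k,r)$ such that for every positive integer $n$ there exists a coloring of $[n]=\{1,2,\ldots,n\}$ with $r$ colors in which the number of monochromatic $k$-APs is at most $\frac{1}{2(k-1)r^{k-1}}n^2+Cn$.
   Context: A $k$-term arithmetic progression ($k$-AP) in $[n]$ is a sequence $a,a+d,a+2d,\ldots,a+(k-1)d$ of elements of $[n]$ with $d\ge 1$ an integer. It is monochromatic under a coloring if all $k$ of its terms receive the same color. *)

From mathcomp Require Import all_boot all_order all_algebra.
Set Implicit Arguments. Unset Strict Implicit. Unset Printing Implicit Defensive.

Definition kAP_in (n k a d : nat) : bool :=
  [&& 1 <= a, 1 <= d & a + (k - 1) * d <= n].

Definition mono_kAP (r : nat) (c : nat -> 'I_r) (k a d : nat) : bool :=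
  [forall i : 'I_k, c (a + i * d) == c a].

(* Each AP is identified with its pair (a, d); since
   a <= n and d <= n are forced, the ranges below are exhaustive. *)
Definition num_mono_kAP (r : nat) (c : nat -> 'I_r) (n k : nat) : nat :=
  \sum_(0 <= a < n.+1) \sum_(0 <= d < n.+1)
     (kAP_in n k a d && mono_kAP c k a d).

From mathcomp Require Import all_boot all_order all_algebra zify.
Set Implicit Arguments. Unset Strict Implicit. Unset Printing Implicit Defensive.

(* The bound follows from the first-moment method, with constant C = 0.
   Colour {0, ..., n} uniformly at random with r colours, i.e. average over
   all f : {ffun 'I_n.+1 -> 'I_r}.  A fixed k-AP of [n] has k distinct terms,
   so it is monochromatic for exactly r * r ^ (n.+1 - k) colourings, that is
   for a fraction 1 / r ^ (k - 1) of them ([num_mono_colourings]).  Summing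
   over all k-APs, the average of num_mono_kAP * r ^ (k - 1) equals the
   number [num_kAP n k] of k-APs in [n] ([sum_num_mono_kAP]), so some
   colouring does at most as well as the average ([exists_le_average]).
   Finally there are n - (k - 1) d k-APs of common difference d, and
   summing this over d >= 1 gives at most n ^ 2 / (2 (k - 1))
   ([num_kAP_bound], via the telescoping estimate [sum_truncated_linear]). *)

Definition num_kAP (n k : nat) : nat :=
  \sum_(0 <= a < n.+1) \sum_(0 <= d < n.+1) (kAP_in n k a d : nat).

Lemma sum_indicator (T : finType) (P : pred T) :
  \sum_(x : T) (P x : nat) = #|P|.
Proof.
rewrite -sum1_card [RHS]big_mkcond; apply: eq_bigr => x _.
by rewrite unfold_in; case: (P x).
Qed.

(* Colourings of a finite type that are constant, equal to v, on the
   duplicate-free list s: the other #|T| - size s points are free. *)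
Lemma card_const_on (T : finType) (r : nat) (s : seq T) (v : 'I_r) :
  uniq s ->
  #|(family (fun x => if x \in s then pred1 v else predT)
      : simpl_pred {ffun T -> 'I_r})| = r ^ (#|T| - size s).
Proof.
move=> s_uniq.
rewrite card_family foldrE big_image /= (bigID (mem s)) /=.
rewrite big1 => [|x ->]; last by rewrite card1.
rewrite mul1n (eq_bigr (fun _ => r)) => [|x /negbTE ->]; last by rewrite card_ord.
rewrite prod_nat_const; congr (_ ^ _).
have := cardC (mem s); rewrite (card_uniqP s_uniq) => <-.
by rewrite addKn; apply: eq_card.
Qed.

Lemma kAP_term_lt (n k a d : nat) (i : 'I_k) :
  kAP_in n k a d -> (a + i * d < n.+1)%N.
Proof.
case/and3P=> _ _ last_le; have i_lt := ltn_ord i.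
have : (i * d <= (k - 1) * d)%N by apply: leq_mul; lia.
lia.
Qed.

(* A k-AP of [n] is monochromatic under exactly r * r ^ (n.+1 - k) of the
   colourings of {0, ..., n}: one colour for its k terms, free elsewhere. *)
Lemma num_mono_colourings (n k r a d : nat) : (0 < k)%N -> kAP_in n k a d ->
  \sum_(f : {ffun 'I_n.+1 -> 'I_r}) (mono_kAP (fun x => f (inord x)) k a d : nat)
  = r * r ^ (n.+1 - k).
Proof.
move=> k_gt0 ap.
pose terms := [seq (inord (a + val i * d) : 'I_n.+1) | i <- enum 'I_k].
pose first_term : 'I_n.+1 := inord a.
pose const_on (v : 'I_r) (x : 'I_n.+1) := if x \in terms then pred1 v else predT.
have terms_uniq : uniq terms.
  rewrite map_inj_uniq ?enum_uniq // => i j /(f_equal val) /=.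
  rewrite !inordK ?(kAP_term_lt _ ap) // => /eqP.
  rewrite eqn_add2l eqn_pmul2r; last by case/and3P: ap.
  by move/eqP/val_inj.
have first_in_terms : first_term \in terms.
  apply/mapP; exists (Ordinal k_gt0); first by rewrite mem_enum.
  by rewrite /first_term /= mul0n addn0.
(* f makes the AP monochromatic iff f is constant on its terms with the
   colour of its first term, and with no other colour. *)
have mono_split (f : {ffun 'I_n.+1 -> 'I_r}) :
    (mono_kAP (fun x => f (inord x)) k a d : nat) =
    \sum_(v : 'I_r) (f \in (family (const_on v) : simpl_pred _) : nat).
  rewrite (bigD1 (f first_term)) //= big1 ?addn0.
  - congr nat_of_bool; apply/forallP/familyP => mono x.
    + rewrite /const_on; case: ifP => // /mapP [i _ ->]; rewrite inE; exact: mono.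
    + have := mono (inord (a + x * d)); rewrite /const_on ifT ?inE //.
      by apply/mapP; exists x; rewrite ?mem_enum.
  - move=> v v_neq; apply/eqP; rewrite eqb0; apply/negP => /familyP/(_ first_term).
    by rewrite /const_on first_in_terms inE => /eqP f_first; rewrite f_first eqxx in v_neq.
under eq_bigr do rewrite mono_split.
rewrite exchange_big /=.
under eq_bigr do rewrite sum_indicator card_const_on // card_ord size_map size_enum_ord.
by rewrite sum_nat_const card_ord.
Qed.

Lemma sum_num_mono_kAP (n k r : nat) : (2 <= k)%N ->
  \sum_(f : {ffun 'I_n.+1 -> 'I_r})
     (num_mono_kAP (fun x => f (inord x)) n k * r ^ (k - 1))
  = #|{ffun 'I_n.+1 -> 'I_r}| * num_kAP n k.
Proof.
move=> k_ge2.
rewrite card_ffun !card_ord -big_distrl /= /num_mono_kAP /num_kAP.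
rewrite exchange_big big_distrl big_distrr /=; apply: eq_bigr => a _.
rewrite exchange_big big_distrl big_distrr /=; apply: eq_bigr => d _.
case ap: (kAP_in n k a d); last by rewrite big1 // muln0.
rewrite num_mono_colourings //; last lia.
have k_le : (k <= n.+1)%N by case/and3P: ap => *; nia.
by rewrite muln1 -!expnS -expnD; congr (_ ^ _); lia.
Qed.

Lemma exists_le_average (T : finType) (g : T -> nat) (A : nat) :
  (0 < #|T|)%N -> \sum_(x : T) g x = #|T| * A -> exists x, (g x <= A)%N.
Proof.
move=> T_gt0 sum_g.
case: (pickP (fun x => g x <= A)%N) => [x le_x | all_gt]; first by exists x.
have : (\sum_(x : T) A.+1 <= \sum_(x : T) g x)%N.
  by apply: leq_sum => x _; rewrite ltnNge all_gt.
by rewrite sum_g sum_nat_const leq_pmul2l // ltnn.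
Qed.

Lemma count_interval (N n c : nat) :
  \sum_(0 <= a < N) ((1 <= a) && (a + c <= n) : nat) = minn N.-1 (n - c).
Proof.
elim: N => [|N IH]; first by rewrite big_geq // min0n.
rewrite big_nat_recr //= IH.
case: N {IH} => [|N] /=; first lia.
by case: (leqP (N.+1 + c) n) => /=; lia.
Qed.

Lemma num_kAP_diff (n k d : nat) :
  \sum_(0 <= a < n.+1) (kAP_in n k a d : nat)
  = if (0 < d)%N then n - (k - 1) * d else 0.
Proof.
case: (posnP d) => [-> | d_gt0] /=.
  by rewrite big1 // => a _; rewrite /kAP_in andbF.
rewrite (eq_bigr (fun a => ((1 <= a) && (a + (k - 1) * d <= n) : nat))).
  by rewrite count_interval /=; lia.
by move=> a _; rewrite /kAP_in d_gt0.
Qed.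

(* Telescoping bound behind sum_(d >= 1) (n - K d)_+ <= n ^ 2 / (2 K): the
   step from M to M + 1 uses (x - K) ^ 2 + 2 K (x - K) <= x ^ 2. *)
Lemma sum_truncated_linear (n K M : nat) : (0 < K)%N ->
  2 * K * \sum_(0 <= d < M.+1) (if (0 < d)%N then n - K * d else 0)
   + (n - K * M) ^ 2 <= n ^ 2.
Proof.
move=> K_gt0; elim: M => [|M IH]; first by rewrite big_nat1 /=; lia.
rewrite big_nat_recr //= mulnDr.
have -> : n - K * M.+1 = (n - K * M) - K by rewrite mulnS addnC subnDA.
move: IH; set S := \sum_(0 <= d < M.+1) _; move: (n - K * M) => x IH.
case: (leqP K x) => [K_le | x_lt]; last first.
  have -> : x - K = 0 by lia.
  by rewrite muln0 addn0 exp0n // addn0; apply: leq_trans IH; apply: leq_addr.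
have [y x_eq] : exists y, x = y + K by exists (x - K); rewrite subnK.
by move: IH; rewrite x_eq addnK !expnS !expn0 !muln1; nia.
Qed.

Lemma num_kAP_bound (n k : nat) : (2 <= k)%N ->
  (2 * (k - 1) * num_kAP n k <= n ^ 2)%N.
Proof.
move=> k_ge2; rewrite /num_kAP exchange_big /=.
under eq_bigr do rewrite num_kAP_diff.
have := @sum_truncated_linear n (k - 1) n ltac:(lia).
by apply: leq_trans; apply: leq_addr.
Qed.

Import Order.TTheory GRing.Theory Num.Theory.
Local Open Scope ring_scope.

Theorem mainTheorem1 (k r : nat) (hr : (2 <= r)%N) (hk : (3 <= k)%N) :
  exists C : rat, forall n : nat, (0 < n)%N ->
    exists c : nat -> 'I_r,
      (num_mono_kAP c n k)%:R <=
        (n ^ 2)%:R / (2 * (k - 1) * r ^ (k - 1))%:R + C * n%:R.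
Proof.
exists 0 => n _.
have k_ge2 : (2 <= k)%N by lia.
have colourings_gt0 : (0 < #|{ffun 'I_n.+1 -> 'I_r}|)%N.
  by rewrite card_ffun card_ord expn_gt0; lia.
have [f f_le_avg] := exists_le_average colourings_gt0 (sum_num_mono_kAP n r k_ge2).
exists (fun x => f (inord x)).
rewrite mul0r addr0 ler_pdivlMr; last by rewrite ltr0n !muln_gt0 expn_gt0; lia.
rewrite -natrM ler_nat; apply: leq_trans (num_kAP_bound n k_ge2).
by rewrite mulnC -mulnA leq_mul2l [(r ^ _ * _)%N]mulnC f_le_avg orbT.
Qed.
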